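(* The class of $(\circ,\wedge,\mathsf{A})$-algebras that are completely representable by partial functions is not axiomatisable by any existential-universal-existential first-order theory.
   Context: A $(\circ,\wedge,\mathsf{A})$-algebra is a set with two binary operations $\circ,\wedge$ and one unary operation $\mathsf{A}$. An algebra of partial functions of this signature is a set of partial functions, with base $X$ the union of all their domains and ranges, closed under: composition $f\circ g=\{(x,z)\mid \exists y\,(x,y)\in f,(y,z)\in g\}$; intersection; antidomain $\mathsf{A}(f)=\{(x,x)\mid x\in X, x\notin\mathrm{dom}(f)\}$. A representation by partial functions is an isomorphism onto such an algebra. The order is $a\le b\iff a\wedge b=a$. A representation $\theta$ is complete if for every nonempty $S$ with $\bigwedge S$ existing, $\theta(\bigwedge S)=\bigcap\theta[S]$ (equivalently, for every $S$ with $\bigvee S$ existing, $\theta(\bigvee S)=\bigcup\theta[S]$). An algebra is completely representable if it has a complete representation. An existential-universal-existential theory is a set of prenex sentences whose quantifier prefix consists of a block of existentials, then universals, then existentials. *)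

From Stdlib Require Import List.
Import ListNotations.

Record algebra := Algebra {
  carrier :> Type;
  comp : carrier -> carrier -> carrier;
  meet : carrier -> carrier -> carrier;
  antidom : carrier -> carrier
}.

Inductive term : Type :=
| TVar : nat -> term
| TComp : term -> term -> term
| TMeet : term -> term -> term
| TAnt : term -> term.

Inductive formula : Type :=
| FEq : term -> term -> formula
| FNot : formula -> formula
| FAnd : formula -> formula -> formula
| FOr : formula -> formula -> formula
| FEx : nat -> formula -> formula
| FAll : nat -> formula -> formula.

Fixpoint eval (M : algebra) (v : nat -> M) (t : term) : M :=
  match t with
  | TVar n => v n
  | TComp s u => comp M (eval M v s) (eval M v u)
  | TMeet s u => meet M (eval M v s) (eval M v u)
  | TAnt s => antidom M (eval M v s)
  end.

Definition upd {X : Type} (v : nat -> X) (n : nat) (x : X) : nat -> X :=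
  fun k => if Nat.eqb k n then x else v k.

Fixpoint sat (M : algebra) (v : nat -> M) (phi : formula) : Prop :=
  match phi with
  | FEq s u => eval M v s = eval M v u
  | FNot p => ~ sat M v p
  | FAnd p q => sat M v p /\ sat M v q
  | FOr p q => sat M v p \/ sat M v q
  | FEx n p => exists x : M, sat M (upd v n x) p
  | FAll n p => forall x : M, sat M (upd v n x) p
  end.

Definition holds (M : algebra) (phi : formula) : Prop :=
  forall v : nat -> M, sat M v phi.

Fixpoint term_vars_in (P : nat -> Prop) (t : term) : Prop :=
  match t with
  | TVar n => P n
  | TComp s u | TMeet s u => term_vars_in P s /\ term_vars_in P u
  | TAnt s => term_vars_in P s
  end.

Fixpoint closed_in (P : nat -> Prop) (phi : formula) : Prop :=
  match phi with
  | FEq s u => term_vars_in P s /\ term_vars_in P u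
  | FNot p => closed_in P p
  | FAnd p q | FOr p q => closed_in P p /\ closed_in P q
  | FEx n p | FAll n p => closed_in (fun k => k = n \/ P k) p
  end.

Definition sentence (phi : formula) : Prop := closed_in (fun _ => False) phi.

Fixpoint quantifier_free (phi : formula) : Prop :=
  match phi with
  | FEq _ _ => True
  | FNot p => quantifier_free p
  | FAnd p q | FOr p q => quantifier_free p /\ quantifier_free q
  | FEx _ _ | FAll _ _ => False
  end.

Fixpoint exs (l : list nat) (phi : formula) : formula :=
  match l with [] => phi | n :: l' => FEx n (exs l' phi) end.
Fixpoint alls (l : list nat) (phi : formula) : formula :=
  match l with [] => phi | n :: l' => FAll n (alls l' phi) end.

Definition EAE_sentence (phi : formula) : Prop :=
  sentence phi /\
  exists (l1 l2 l3 : list nat) (psi : formula),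
    quantifier_free psi /\ phi = exs l1 (alls l2 (exs l3 psi)).

Definition le (M : algebra) (a b : M) : Prop := meet M a b = a.

Definition is_glb (M : algebra) (S : M -> Prop) (m : M) : Prop :=
  (forall s, S s -> le M m s) /\
  (forall l, (forall s, S s -> le M l s) -> le M l m).

Definition partial_function_rep (M : algebra) (X : Type)
    (theta : M -> X -> X -> Prop) : Prop :=
  (forall a x y z, theta a x y -> theta a x z -> y = z) /\
  (forall x : X, exists a y, theta a x y \/ theta a y x) /\
  (forall a b, (forall x y, theta a x y <-> theta b x y) -> a = b) /\
  (* composition (diagrammatic order) *)
  (forall a b x z, theta (comp M a b) x z <->
                   exists y, theta a x y /\ theta b y z) /\
  (forall a b x y, theta (meet M a b) x y <-> theta a x y /\ theta b x y) /\
  (forall a x y, theta (antidom M a) x y <->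
                 x = y /\ ~ (exists z, theta a x z)).

Definition complete_rep (M : algebra) (X : Type)
    (theta : M -> X -> X -> Prop) : Prop :=
  partial_function_rep M X theta /\
  forall (S : M -> Prop) (m : M),
    (exists s, S s) -> is_glb M S m ->
    forall x y, theta m x y <-> (forall s, S s -> theta s x y).

Definition completely_representable (M : algebra) : Prop :=
  exists (X : Type) (theta : M -> X -> X -> Prop), complete_rep M X theta.

(* Let A1 be the algebra of all subsets of nat and A2 the algebra of those
   subsets of nat + 2^nat whose trace on Cantor space 2^nat is clopen; in both,
   composition and meet are intersection and antidomain is complement, as for
   sub-identities.  A1 is atomic, so reading sets as sub-identities is a
   complete representation.  In a representation of A2, a point x in the image
   of the Cantor part determines the ultrafilter of elements containing (x, x);
   Cantor space has no isolated points, so this ultrafilter has meet 0, and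
   completeness would put (x, x) into the image of 0.

   Nevertheless every existential-universal-existential sentence true in A1 is
   true in A2.  For assignments v into A1 and w into A2 and each Boolean pattern
   e of the variables, compare the size s <= infinity of the e-cell of v, the
   size a of the nat part of the e-cell of w, and whether the latter meets
   Cantor space (r).  The conditions "s = a, and a is infinite if r", then
   "s is infinite if r, and s = a otherwise", then "s = 0 iff (a = 0 and not r),
   and r or s <= a" are preserved by the moves of the three quantifier blocks
   (Cantor parts of cells are clopen, so an answer in A2 can halve them along a
   fresh bit), and the last one makes v and w realize the same patterns, hence
   satisfy the same quantifier-free formulas. *)

From Stdlib Require Import Bool List Arith Lia Classical FunctionalExtensionality
  PropExtensionality IndefiniteDescription ClassicalDescription.
Import ListNotations.

Record field_of_sets := FieldOfSets {
  point : Type;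
  admissible : (point -> bool) -> Prop;
  admissible_and : forall f g, admissible f -> admissible g ->
    admissible (fun p => f p && g p);
  admissible_neg : forall f, admissible f -> admissible (fun p => negb (f p)) }.

Definition fs_elem (S : field_of_sets) := {f : point S -> bool | admissible S f}.

Definition fs_meet (S : field_of_sets) (a b : fs_elem S) : fs_elem S :=
  exist _ _ (admissible_and S _ _ (proj2_sig a) (proj2_sig b)).

Definition fs_compl (S : field_of_sets) (a : fs_elem S) : fs_elem S :=
  exist _ _ (admissible_neg S _ (proj2_sig a)).

Definition fs_algebra (S : field_of_sets) : algebra :=
  Algebra (fs_elem S) (fs_meet S) (fs_meet S) (fs_compl S).

Lemma fs_elem_ext S (a b : fs_elem S) :
  (forall p, proj1_sig a p = proj1_sig b p) -> a = b.
Proof.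
  destruct a as [f Hf], b as [g Hg]; simpl; intros H.
  apply functional_extensionality in H; subst g.
  f_equal; apply proof_irrelevance.
Qed.

Lemma fs_le_pointwise S (a b : fs_elem S) p :
  le (fs_algebra S) a b -> proj1_sig a p = true -> proj1_sig b p = true.
Proof.
  intros Hab Ha; apply (f_equal (fun c : fs_elem S => proj1_sig c p)) in Hab.
  simpl in Hab; rewrite Ha in Hab; exact Hab.
Qed.

Lemma fs_le_of_pointwise S (a b : fs_elem S) :
  (forall p, proj1_sig a p = true -> proj1_sig b p = true) -> le (fs_algebra S) a b.
Proof.
  intros H; apply fs_elem_ext; intros p; simpl.
  destruct (proj1_sig a p) eqn:Ea; [now rewrite (H p Ea) | reflexivity].
Qed.

Fixpoint eval_bool (t : term) (e : nat -> bool) : bool :=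
  match t with
  | TVar n => e n
  | TComp s u | TMeet s u => eval_bool s e && eval_bool u e
  | TAnt s => negb (eval_bool s e)
  end.

Lemma eval_bool_ext t e e' : (forall i, e i = e' i) -> eval_bool t e = eval_bool t e'.
Proof. intros H; induction t; simpl; congruence. Qed.

Lemma fs_eval_pointwise S (v : nat -> fs_elem S) t p :
  proj1_sig (eval (fs_algebra S) v t) p = eval_bool t (fun i => proj1_sig (v i) p).
Proof. induction t; simpl; congruence. Qed.

Definition cell S (v : nat -> fs_elem S) (e : nat -> bool) (p : point S) : Prop :=
  forall i, proj1_sig (v i) p = e i.

Definition realized S (v : nat -> fs_elem S) (e : nat -> bool) : Prop :=
  exists p, cell S v e p.

Lemma fs_eval_eq_iff S (v : nat -> fs_elem S) t s :
  eval (fs_algebra S) v t = eval (fs_algebra S) v s <->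
  (forall e, realized S v e -> eval_bool t e = eval_bool s e).
Proof.
  split.
  - intros H e [p Hp].
    apply (f_equal (fun c : fs_elem S => proj1_sig c p)) in H.
    rewrite !fs_eval_pointwise in H.
    now rewrite (eval_bool_ext t _ (fun i => proj1_sig (v i) p)),
                (eval_bool_ext s _ (fun i => proj1_sig (v i) p)).
  - intros H; apply fs_elem_ext; intros p; rewrite !fs_eval_pointwise.
    apply H; exists p; intros i; reflexivity.
Qed.

Lemma qf_sat_transfer (M1 M2 : algebra) (v : nat -> M1) (w : nat -> M2) :
  (forall t s, eval M1 v t = eval M1 v s <-> eval M2 w t = eval M2 w s) ->
  forall psi, quantifier_free psi -> (sat M1 v psi <-> sat M2 w psi).
Proof.
  intros H psi; induction psi; simpl; intros Hq; try contradiction.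
  - apply H.
  - rewrite IHpsi; tauto.
  - destruct Hq; rewrite IHpsi1, IHpsi2 by assumption; tauto.
  - destruct Hq; rewrite IHpsi1, IHpsi2 by assumption; tauto.
Qed.

Lemma fs_qf_sat_transfer S1 S2 (v : nat -> fs_elem S1) (w : nat -> fs_elem S2) :
  (forall e, realized S1 v e <-> realized S2 w e) ->
  forall psi, quantifier_free psi ->
    (sat (fs_algebra S1) v psi <-> sat (fs_algebra S2) w psi).
Proof.
  intros H; apply qf_sat_transfer; intros t s; rewrite !fs_eval_eq_iff.
  split; intros Hts e He; apply Hts, H, He.
Qed.

Lemma eval_agree (M : algebra) (P : nat -> Prop) t (v v' : nat -> M) :
  term_vars_in P t -> (forall k, P k -> v k = v' k) -> eval M v t = eval M v' t.
Proof. intros Ht Hv; induction t; simpl in *; try destruct Ht; f_equal; auto. Qed.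

Lemma upd_agree {X : Type} (P : nat -> Prop) (v v' : nat -> X) n x :
  (forall k, P k -> v k = v' k) ->
  forall k, k = n \/ P k -> upd v n x k = upd v' n x k.
Proof.
  intros Hv k Hk; unfold upd; destruct (Nat.eqb_spec k n); [reflexivity|].
  destruct Hk; [contradiction | auto].
Qed.

Lemma sat_agree (M : algebra) phi : forall (P : nat -> Prop) (v v' : nat -> M),
  closed_in P phi -> (forall k, P k -> v k = v' k) -> (sat M v phi <-> sat M v' phi).
Proof.
  induction phi; simpl; intros P v v' Hc Hv.
  - destruct Hc; now rewrite (eval_agree M P t v v'), (eval_agree M P t0 v v').
  - now rewrite (IHphi P v v').
  - destruct Hc; now rewrite (IHphi1 P v v'), (IHphi2 P v v').
  - destruct Hc; now rewrite (IHphi1 P v v'), (IHphi2 P v v').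
  - split; intros [x Hx]; exists x;
      eapply (IHphi _ (upd v n x) (upd v' n x) Hc (upd_agree P v v' n x Hv)); exact Hx.
  - split; intros Hx x;
      eapply (IHphi _ (upd v n x) (upd v' n x) Hc (upd_agree P v v' n x Hv)); apply Hx.
Qed.

Lemma EAE_preserved (M1 M2 : algebra) (RX RA RE : (nat -> M1) -> (nat -> M2) -> Prop)
  (forthX : forall v w n x, RX v w -> exists x', RX (upd v n x) (upd w n x'))
  (RX_RA : forall v w, RX v w -> RA v w)
  (backA : forall v w n y', RA v w -> exists y, RA (upd v n y) (upd w n y'))
  (RA_RE : forall v w, RA v w -> RE v w)
  (forthE : forall v w n z, RE v w -> exists z', RE (upd v n z) (upd w n z'))
  (RE_qf : forall v w psi, RE v w -> quantifier_free psi -> sat M1 v psi -> sat M2 w psi)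
  (RX_nonempty : exists v w, RX v w) :
  forall phi, EAE_sentence phi -> holds M1 phi -> holds M2 phi.
Proof.
  intros phi [Hs (l1 & l2 & l3 & psi & Hq & ->)] H1 w.
  destruct RX_nonempty as (v0 & w0 & H0).
  apply (sat_agree M2 _ (fun _ => False) w0 w Hs (fun k (f : False) => match f with end)).
  specialize (H1 v0); clear w Hs.
  revert v0 w0 H0 H1; induction l1 as [|n l1 IH]; simpl; intros v w H0 H1.
  2:{ destruct H1 as [x Hx]; destruct (forthX v w n x H0) as [x' Hx'].
      exists x'; exact (IH _ _ Hx' Hx). }
  apply RX_RA in H0; revert v w H0 H1; induction l2 as [|n l2 IH]; simpl; intros v w H0 H1.
  2:{ intros y'; destruct (backA v w n y' H0) as [y Hy]; exact (IH _ _ Hy (H1 y)). }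
  apply RA_RE in H0; revert v w H0 H1; induction l3 as [|n l3 IH]; simpl; intros v w H0 H1.
  - exact (RE_qf v w psi H0 Hq H1).
  - destruct H1 as [x Hx]; destruct (forthE v w n x H0) as [x' Hx'].
    exists x'; exact (IH _ _ Hx' Hx).
Qed.

Inductive enat := fin (k : nat) | inf.

Definition enat_add (a b : enat) : enat :=
  match a, b with fin x, fin y => fin (x + y) | _, _ => inf end.

Definition enat_le (a b : enat) : Prop :=
  match a, b with
  | fin x, fin y => x <= y
  | _, inf => True
  | inf, fin _ => False
  end.

Definition enat_sub (a b : enat) : enat :=
  match a, b with
  | fin x, fin y => fin (x - y)
  | inf, _ => inf
  | fin _, inf => fin 0
  end.

Lemma enat_add_0_l x : enat_add (fin 0) x = x. Proof. now destruct x. Qed.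
Lemma enat_add_0_r x : enat_add x (fin 0) = x.
Proof. destruct x; simpl; [now rewrite Nat.add_0_r | reflexivity]. Qed.
Lemma enat_add_eq_0 x y : enat_add x y = fin 0 <-> x = fin 0 /\ y = fin 0.
Proof.
  destruct x as [x|], y as [y|]; simpl; split; intros H; try discriminate;
    try (destruct H; discriminate).
  - injection H; intros; split; f_equal; lia.
  - now destruct H as [[= ->] [= ->]].
Qed.
Lemma enat_add_eq_inf x y : enat_add x y = inf <-> x = inf \/ y = inf.
Proof. destruct x, y; simpl; intuition discriminate. Qed.

Lemma enat_le_refl x : enat_le x x. Proof. destruct x; simpl; auto. Qed.
Lemma enat_le_0 x : enat_le (fin 0) x. Proof. destruct x; simpl; auto; lia. Qed.
Lemma enat_le_add x1 y1 x2 y2 :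
  enat_le x1 y1 -> enat_le x2 y2 -> enat_le (enat_add x1 x2) (enat_add y1 y2).
Proof. destruct x1, y1, x2, y2; simpl; auto; lia. Qed.
Lemma enat_le_add_l x y a : enat_le (enat_add x y) a -> enat_le x a.
Proof. destruct x, y, a; simpl; auto; lia. Qed.
Lemma enat_le_sub x y a : enat_le (enat_add x y) a -> enat_le y (enat_sub a x).
Proof. destruct x, y, a; simpl; auto; lia. Qed.
Lemma enat_add_sub x a : enat_le x a -> enat_add x (enat_sub a x) = a.
Proof. destruct x, a; simpl; try contradiction; auto; intros; f_equal; lia. Qed.
Lemma enat_le_0_r x y : enat_le x y -> y = fin 0 -> x = fin 0.
Proof. destruct x, y; simpl; try discriminate; intros ? [= ->]; f_equal; lia. Qed.

(** * Cardinalities of sets of naturals *)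

Definition card_is (P : nat -> Prop) (s : enat) : Prop :=
  match s with
  | fin k => exists l, NoDup l /\ length l = k /\ forall x, P x <-> In x l
  | inf => forall n, exists m, n <= m /\ P m
  end.

Lemma card_is_ext P Q s : (forall x, P x <-> Q x) -> card_is P s -> card_is Q s.
Proof.
  intros H; destruct s; simpl.
  - intros (l & Hn & Hl & HP); exists l; split; [|split]; auto.
    intros x; rewrite <- H; apply HP.
  - intros HP n; destruct (HP n) as (m & ? & ?); exists m; split; auto; apply H; auto.
Qed.

Fixpoint list_max (l : list nat) : nat :=
  match l with [] => 0 | x :: l => Nat.max x (list_max l) end.

Lemma list_max_ge l x : In x l -> x <= list_max l.
Proof. induction l; simpl; intros []; subst; auto; try lia; specialize (IHl H); lia. Qed.

Lemma card_is_0 P : card_is P (fin 0) <-> forall x, ~ P x.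
Proof.
  simpl; split.
  - intros ([|] & _ & Hlen & Hl) x Hx; [exact (proj1 (Hl x) Hx) | discriminate].
  - intros H; exists []; repeat split; [constructor | | ]; simpl; [apply H | tauto].
Qed.

Lemma card_is_unique P s s' : card_is P s -> card_is P s' -> s = s'.
Proof.
  assert (Hfi : forall k, card_is P (fin k) -> ~ card_is P inf).
  { intros k (l & _ & _ & Hl) H.
    destruct (H (S (list_max l))) as (m & Hm & HP).
    apply Hl, list_max_ge in HP; lia. }
  destruct s as [k|], s' as [k'|]; intros H H'.
  - f_equal; destruct H as (l & Hn & <- & Hl), H' as (l' & Hn' & <- & Hl').
    apply Nat.le_antisymm; apply NoDup_incl_length; auto; intros x Hx;
      [apply Hl', Hl | apply Hl, Hl']; exact Hx.
  - now destruct (Hfi k H).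
  - now destruct (Hfi k' H').
  - reflexivity.
Qed.

Lemma card_is_nonempty P s : card_is P s -> ((exists x, P x) <-> s <> fin 0).
Proof.
  intros H; split.
  - intros [x Hx] ->; exact (proj1 (card_is_0 P) H x Hx).
  - intros Hs; apply NNPP; intros Hn; apply Hs, (card_is_unique P); [exact H|].
    apply card_is_0; intros x Hx; apply Hn; eauto.
Qed.

Lemma card_is_below P B : exists l, NoDup l /\ forall x, P x /\ x < B <-> In x l.
Proof.
  induction B as [|B (l & Hn & Hl)].
  - exists []; split; [constructor | intros x; simpl; lia].
  - destruct (classic (P B)) as [HB|HB].
    + exists (B :: l); split.
      * constructor; auto; intros Hi; apply Hl in Hi; lia.
      * intros x; simpl; rewrite <- Hl; split.
        -- intros [Hx Hlt]; destruct (Nat.eq_dec B x); [left | right; split]; auto; lia.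
        -- intros [<-|[Hx Hlt]]; split; auto; lia.
    + exists l; split; auto; intros x; rewrite <- Hl; split; intros [Hx Hlt]; split; auto.
      destruct (Nat.eq_dec x B); subst; [contradiction | lia].
Qed.

Lemma card_is_total P : exists s, card_is P s.
Proof.
  destruct (classic (exists B, forall m, B <= m -> ~ P m)) as [[B HB]|H].
  - destruct (card_is_below P B) as (l & Hn & Hl).
    exists (fin (length l)), l; split; [|split]; auto; intros x; rewrite <- Hl.
    split; [|tauto]; intros Hx; split; auto.
    destruct (Nat.lt_ge_cases x B); auto; exfalso; apply (HB x); auto.
  - exists inf; intros n; apply NNPP; intros Hn; apply H; exists n.
    intros m Hm HP; apply Hn; eauto.
Qed.

Lemma card_is_union P Q s t : (forall x, P x -> Q x -> False) ->
  card_is P s -> card_is Q t -> card_is (fun x => P x \/ Q x) (enat_add s t).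
Proof.
  intros Hd; destruct s as [k|], t as [k'|]; simpl.
  - intros (l & Hn & <- & Hl) (l' & Hn' & <- & Hl'); exists (l ++ l'); repeat split.
    + apply NoDup_app; auto; intros a Ha Ha'; apply (Hd a); [apply Hl | apply Hl']; auto.
    + apply length_app.
    + intros [H|H]; apply in_or_app; [left; apply Hl | right; apply Hl']; auto.
    + intros H; apply in_app_or in H as [H|H]; [left; apply Hl | right; apply Hl']; auto.
  - intros _ H n; destruct (H n) as (m & ? & ?); eauto.
  - intros H _ n; destruct (H n) as (m & ? & ?); eauto.
  - intros H _ n; destruct (H n) as (m & ? & ?); eauto.
Qed.

Lemma card_is_pieces P s (z : nat -> bool) : card_is P s ->
  exists st sf, card_is (fun x => P x /\ z x = true) st /\
    card_is (fun x => P x /\ z x = false) sf /\ s = enat_add st sf.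
Proof.
  intros Hs; destruct (card_is_total (fun x => P x /\ z x = true)) as [st Ht].
  destruct (card_is_total (fun x => P x /\ z x = false)) as [sf Hf].
  exists st, sf; repeat split; auto.
  apply (card_is_unique P); [exact Hs|].
  apply (card_is_ext (fun x => (P x /\ z x = true) \/ (P x /\ z x = false))).
  - intros x; destruct (z x); intuition congruence.
  - apply card_is_union; auto; intros x [_ H1] [_ H2]; congruence.
Qed.

Lemma card_inf_list P : card_is P inf ->
  forall k, exists l, NoDup l /\ length l = k /\ forall x, In x l -> P x.
Proof.
  intros H k; induction k as [|k (l & Hn & Hlen & Hl)].
  - exists []; repeat split; [constructor | intros x []].
  - destruct (H (S (list_max l))) as (m & Hm & HP); exists (m :: l); repeat split.
    + constructor; auto; intros Hi; apply list_max_ge in Hi; lia.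
    + simpl; lia.
    + intros x [<-|Hx]; auto.
Qed.

Lemma card_inf_minus_list P l : card_is P inf ->
  card_is (fun x => P x /\ ~ In x l) inf.
Proof.
  intros H n; destruct (H (Nat.max n (S (list_max l)))) as (m & Hm & HP).
  exists m; repeat split; [lia | exact HP | intros Hi; apply list_max_ge in Hi; lia].
Qed.

Lemma card_inf_enum P : card_is P inf ->
  exists e : nat -> nat, (forall k, P (e k)) /\ forall k, e k < e (S k).
Proof.
  intros H; destruct (functional_choice _ H) as [g Hg].
  exists (fix e k := match k with 0 => g 0 | S k => g (S (e k)) end).
  split; [intros [|k]; apply Hg |].
  intros k; simpl; match goal with |- ?a < g (S ?a) => destruct (Hg (S a)); lia end.
Qed.

Lemma NoDup_app_disjoint {A : Type} (l1 l2 : list A) x :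
  NoDup (l1 ++ l2) -> In x l1 -> In x l2 -> False.
Proof.
  induction l1; simpl; intros Hn H1 H2; [exact H1|].
  inversion Hn; subst; destruct H1 as [->|H1]; eauto.
  apply H3, in_or_app; auto.
Qed.

Lemma card_split_fin_fin P k1 k2 : card_is P (fin (k1 + k2)) ->
  exists T, card_is (fun x => P x /\ T x) (fin k1) /\ card_is (fun x => P x /\ ~ T x) (fin k2).
Proof.
  intros (l & Hn & Hlen & Hl).
  rewrite <- (firstn_skipn k1 l) in Hn, Hl.
  exists (fun x => In x (firstn k1 l)); split.
  - exists (firstn k1 l); split; [|split].
    + exact (NoDup_app_remove_r _ _ Hn).
    + rewrite length_firstn; lia.
    + intros x; split; [intros [_ Hx]; exact Hx|].
      intros Hx; split; auto; apply Hl, in_or_app; auto.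
  - exists (skipn k1 l); split; [|split].
    + exact (NoDup_app_remove_l _ _ Hn).
    + rewrite length_skipn; lia.
    + intros x; split; [intros [Hx Hx']; apply Hl, in_app_or in Hx as [?|?]; tauto|].
      intros Hx; split; [apply Hl, in_or_app; auto|].
      intros Hx'; exact (NoDup_app_disjoint _ _ _ Hn Hx' Hx).
Qed.

Lemma card_split_fin_inf P k : card_is P inf ->
  exists T, card_is (fun x => P x /\ T x) (fin k) /\ card_is (fun x => P x /\ ~ T x) inf.
Proof.
  intros H; destruct (card_inf_list P H k) as (l & Hn & Hlen & Hl).
  exists (fun x => In x l); split; [|exact (card_inf_minus_list P l H)].
  exists l; split; [|split]; auto; intros x; split; [intros [_ Hx]; exact Hx | auto].
Qed.

Lemma card_split_inf_inf P : card_is P inf ->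
  exists T, card_is (fun x => P x /\ T x) inf /\ card_is (fun x => P x /\ ~ T x) inf.
Proof.
  intros H; destruct (card_inf_enum P H) as (e & He & Hmono).
  assert (Hlt : forall a b, a < b -> e a < e b).
  { intros a b Hab; induction Hab; [apply Hmono | specialize (Hmono m); lia]. }
  assert (Hge : forall k, k <= e k).
  { induction k; [lia | specialize (Hmono k); lia]. }
  exists (fun x => exists k, x = e (2 * k)); split.
  - intros n; exists (e (2 * n)); specialize (Hge (2 * n)); split; [lia | eauto].
  - intros n; exists (e (2 * n + 1)); specialize (Hge (2 * n + 1)); split; [lia|].
    split; auto; intros [k Hk].
    destruct (Nat.lt_trichotomy (2 * n + 1) (2 * k)) as [h|[h|h]];
      [apply Hlt in h | lia | apply Hlt in h]; lia.
Qed.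

Lemma card_split_prop P s1 s2 : card_is P (enat_add s1 s2) ->
  exists T, card_is (fun x => P x /\ T x) s1 /\ card_is (fun x => P x /\ ~ T x) s2.
Proof.
  destruct s1 as [k1|], s2 as [k2|]; simpl enat_add.
  - apply card_split_fin_fin.
  - apply card_split_fin_inf.
  - intros H; destruct (card_split_fin_inf P k2 H) as (T & H2 & H1).
    exists (fun x => ~ T x); split; [exact H1|].
    revert H2; apply card_is_ext; intros x; split; [|intros [? ?%NNPP]]; tauto.
  - apply card_split_inf_inf.
Qed.

Lemma card_split P s1 s2 : card_is P (enat_add s1 s2) ->
  exists G : nat -> bool, card_is (fun x => P x /\ G x = true) s1 /\
    card_is (fun x => P x /\ G x = false) s2.
Proof.
  intros H; destruct (card_split_prop P s1 s2 H) as (T & H1 & H2).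
  exists (fun x => if excluded_middle_informative (T x) then true else false).
  split; [revert H1 | revert H2]; apply card_is_ext; intros x;
    destruct (excluded_middle_informative (T x)); intuition congruence.
Qed.

(** * The two algebras *)

Definition powerset_nat : field_of_sets :=
  {| point := nat; admissible := fun _ => True;
     admissible_and := fun _ _ _ _ => I; admissible_neg := fun _ _ => I |}.

Definition depends_on_prefix (N : nat) (f : nat + (nat -> bool) -> bool) : Prop :=
  forall om om', (forall j, j < N -> om j = om' j) -> f (inr om) = f (inr om').

Lemma depends_on_prefix_mono N N' f :
  N <= N' -> depends_on_prefix N f -> depends_on_prefix N' f.
Proof. intros H D om om' Hom; apply D; intros j Hj; apply Hom; lia. Qed.

Lemma depends_on_prefix_const N b : depends_on_prefix N (fun _ => b).
Proof. intros ? ? ?; reflexivity. Qed.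

Lemma finitary_and f g :
  (exists N, depends_on_prefix N f) -> (exists N, depends_on_prefix N g) ->
  exists N, depends_on_prefix N (fun p => f p && g p).
Proof.
  intros [N1 H1] [N2 H2]; exists (Nat.max N1 N2); intros om om' Hom.
  rewrite (depends_on_prefix_mono N1 (Nat.max N1 N2) f ltac:(lia) H1 om om' Hom),
          (depends_on_prefix_mono N2 (Nat.max N1 N2) g ltac:(lia) H2 om om' Hom).
  reflexivity.
Qed.

Lemma finitary_neg f :
  (exists N, depends_on_prefix N f) -> exists N, depends_on_prefix N (fun p => negb (f p)).
Proof. intros [N H]; exists N; intros om om' Hom; now rewrite (H om om' Hom). Qed.

(** Subsets of the disjoint union of [nat] and Cantor space whose trace on
    Cantor space is clopen. *)
Definition nat_plus_cantor : field_of_sets :=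
  {| point := nat + (nat -> bool);
     admissible := fun f => exists N, depends_on_prefix N f;
     admissible_and := finitary_and; admissible_neg := finitary_neg |}.

Definition A1 := fs_algebra powerset_nat.
Definition A2 := fs_algebra nat_plus_cantor.

Definition A2_of (f : nat + (nat -> bool) -> bool) (N : nat) (Hf : depends_on_prefix N f) : A2 :=
  exist (fun f => exists N, depends_on_prefix N f) f (ex_intro _ N Hf).

Definition A1_top : A1 := exist _ (fun _ => true) I.
Definition A2_top : A2 := A2_of (fun _ => true) 0 (depends_on_prefix_const 0 true).

Definition A1_diag (a : A1) (x y : nat) : Prop := x = y /\ proj1_sig a x = true.

Lemma A1_diag_rep : partial_function_rep A1 nat A1_diag.
Proof.
  unfold A1_diag; split; [|split; [|split; [|split; [|split]]]].
  - intros a x y z [-> _] [-> _]; reflexivity.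
  - intros x; exists A1_top, x; left; split; reflexivity.
  - intros a b H; apply fs_elem_ext; intros p; specialize (H p p).
    destruct (proj1_sig a p), (proj1_sig b p); intuition congruence.
  - intros a b x z; simpl; rewrite andb_true_iff; split.
    + intros [-> [H1 H2]]; exists z; auto.
    + intros [y [[-> H1] [-> H2]]]; auto.
  - intros a b x y; simpl; rewrite andb_true_iff; tauto.
  - intros a x y; simpl; rewrite negb_true_iff; split.
    + intros [-> H]; split; auto; intros [z [-> Hz]]; congruence.
    + intros [-> H]; split; auto.
      destruct (proj1_sig a y) eqn:E; auto; exfalso; apply H; exists y; auto.
Qed.

Lemma A1_completely_representable : completely_representable A1.
Proof.
  exists nat, A1_diag; split; [exact A1_diag_rep|].
  intros S m [s0 Hs0] [Hlb Hglb] x y; split.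
  - intros [-> Hm] s Hs; split; auto; exact (fs_le_pointwise _ m s y (Hlb s Hs) Hm).
  - intros H; destruct (H s0 Hs0) as [-> _]; split; auto.
    set (singleton := exist (fun _ : nat -> bool => True) (fun p => Nat.eqb p y) I : A1).
    apply (fs_le_pointwise _ singleton m y); [|apply Nat.eqb_refl].
    apply Hglb; intros s Hs; apply fs_le_of_pointwise; intros p Hp.
    apply Nat.eqb_eq in Hp as ->; exact (proj2 (H s Hs)).
Qed.

Section PartialFunctionRepresentation.

Variables (M : algebra) (X : Type) (theta : M -> X -> X -> Prop).
Hypothesis rep : partial_function_rep M X theta.

Lemma rep_le a b x y : le M a b -> theta a x y -> theta b x y.
Proof.
  destruct rep as (_ & _ & _ & _ & Hmeet & _); unfold le.
  intros Hab H; rewrite <- Hab in H; apply Hmeet in H; tauto.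
Qed.

Lemma rep_below_compl_empty a c x y : le M c a -> le M c (antidom M a) -> ~ theta c x y.
Proof.
  destruct rep as (_ & _ & _ & _ & _ & Hant).
  intros Ha Hna H; pose proof (rep_le _ _ _ _ Ha H) as Hay.
  apply (rep_le _ _ _ _ Hna), Hant in H as [_ Hn]; exact (Hn (ex_intro _ y Hay)).
Qed.

Hypothesis antidom_antidom : forall a, antidom M (antidom M a) = a.

Lemma rep_subidentity a x y : theta a x y -> x = y.
Proof.
  destruct rep as (_ & _ & _ & _ & _ & Hant).
  rewrite <- (antidom_antidom a); intros H; apply Hant in H; tauto.
Qed.

Lemma rep_diag_dichotomy b x : theta b x x \/ theta (antidom M b) x x.
Proof.
  destruct rep as (_ & _ & _ & _ & _ & Hant).
  destruct (classic (theta (antidom M b) x x)) as [H|H]; [now right | left].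
  destruct (classic (exists z, theta b x z)) as [[z Hz]|Hn].
  - now rewrite <- (rep_subidentity _ _ _ Hz) in Hz.
  - exfalso; apply H, Hant; auto.
Qed.

End PartialFunctionRepresentation.

Definition A2_empty : A2 := A2_of (fun _ => false) 0 (depends_on_prefix_const 0 false).

Definition A2_cantor : A2 :=
  A2_of (fun q => match q with inl _ => false | inr _ => true end) 0
    (fun _ _ _ => eq_refl).

Definition A2_bit (N : nat) : A2 :=
  A2_of (fun q => match q with inl _ => false | inr om => om N end) (S N)
    (fun om om' Hom => Hom N (Nat.lt_succ_diag_r N)).

Lemma A2_empty_le (a : A2) : le A2 A2_empty a.
Proof. now apply fs_le_of_pointwise. Qed.

Lemma upd_prefix (om : nat -> bool) N b j : j < N -> upd om N b j = om j.
Proof. intros Hj; unfold upd; destruct (Nat.eqb_spec j N); [lia | reflexivity]. Qed.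

(** No atoms below the Cantor part: a bit beyond the depth of [l] splits it. *)
Lemma A2_below_cantor_ultra_empty (l : A2) :
  le A2 l A2_cantor -> (forall b, le A2 l b \/ le A2 l (antidom A2 b)) ->
  forall q, proj1_sig l q = false.
Proof.
  intros Hc Hultra q; destruct (proj1_sig l q) eqn:Hq; [exfalso | reflexivity].
  destruct q as [k|om]; [discriminate (fs_le_pointwise _ _ _ _ Hc Hq)|].
  destruct (proj2_sig l) as [N HN].
  assert (Hflip : forall b, proj1_sig l (inr (upd om N b)) = true).
  { intros b; rewrite <- Hq; apply HN; intros j Hj; now apply upd_prefix. }
  destruct (Hultra (A2_bit N)) as [Hb|Hb];
    [pose proof (fs_le_pointwise _ _ _ _ Hb (Hflip false)) as E
    |pose proof (fs_le_pointwise _ _ _ _ Hb (Hflip true)) as E];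
    simpl in E; unfold upd in E; rewrite Nat.eqb_refl in E; discriminate.
Qed.

Lemma A2_not_completely_representable : ~ completely_representable A2.
Proof.
  intros (X & theta & [Hrep Hcomplete]).
  pose proof Hrep as (_ & _ & Hinj & _).
  assert (Hinv : forall a : A2, antidom A2 (antidom A2 a) = a).
  { intros a; apply fs_elem_ext; intros p; apply negb_involutive. }
  assert (Hempty : forall x y, ~ theta A2_empty x y).
  { intros x y; apply (rep_below_compl_empty _ _ _ Hrep A2_top); apply A2_empty_le. }
  assert (Hxy : exists x y, theta A2_cantor x y).
  { apply NNPP; intros Hn.
    assert (E : A2_cantor = A2_empty).
    { apply Hinj; intros x y; split; intros H; exfalso; [apply Hn | apply (Hempty x y)]; eauto. }
    apply (f_equal (fun a : A2 => proj1_sig a (inr (fun _ => true)))) in E; discriminate. }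
  destruct Hxy as (x & y & Hx); rewrite <- (rep_subidentity _ _ _ Hrep Hinv _ _ _ Hx) in Hx.
  assert (Hglb : is_glb A2 (fun b => theta b x x) A2_empty).
  { split; [intros s _; apply A2_empty_le|].
    intros l Hl; apply fs_le_of_pointwise; intros p Hp.
    rewrite (A2_below_cantor_ultra_empty l (Hl _ Hx)) in Hp; [discriminate|].
    intros b; destruct (rep_diag_dichotomy _ _ _ Hrep Hinv b x); auto. }
  apply (Hempty x x), (Hcomplete _ _ (ex_intro _ _ Hx) Hglb); auto.
Qed.

Lemma upd_upd {X : Type} (v : nat -> X) n x y : upd (upd v n x) n y = upd v n y.
Proof.
  apply functional_extensionality; intros i; unfold upd; now destruct (Nat.eqb i n).
Qed.

Lemma upd_eq {X : Type} (v : nat -> X) n x : upd v n x n = x.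
Proof. unfold upd; now rewrite Nat.eqb_refl. Qed.

Lemma cell_upd_disjoint S (v : nat -> fs_elem S) e n p :
  e n = true -> cell S v e p -> cell S v (upd e n false) p -> False.
Proof.
  intros Hn H1 H2; specialize (H1 n); specialize (H2 n); rewrite upd_eq in H2; congruence.
Qed.

Lemma cell_upd_full S (v : nat -> fs_elem S) n x e p : proj1_sig x p = true ->
  cell S (upd v n x) e p <-> e n = true /\ (cell S v e p \/ cell S v (upd e n false) p).
Proof.
  intros Hx; unfold cell, upd; split.
  - intros H; pose proof (H n) as Hn; rewrite Nat.eqb_refl, Hx in Hn; split; auto.
    destruct (proj1_sig (v n) p) eqn:Ev; [left | right]; intros i; specialize (H i);
      destruct (Nat.eqb_spec i n); subst; congruence.
  - intros [Hn [H|H]] i; specialize (H i); destruct (Nat.eqb_spec i n); subst; congruence.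
Qed.

Lemma cell_upd_split S (v : nat -> fs_elem S) n z e p : proj1_sig (v n) p = true ->
  cell S (upd v n z) e p <-> proj1_sig z p = e n /\ cell S v (upd e n true) p.
Proof.
  intros Hv; unfold cell, upd; split.
  - intros H; pose proof (H n) as Hn; rewrite Nat.eqb_refl in Hn; split; auto.
    intros i; specialize (H i); destruct (Nat.eqb_spec i n); subst; congruence.
  - intros [Hz H] i; specialize (H i); destruct (Nat.eqb_spec i n); subst; congruence.
Qed.

(** * The back-and-forth invariant *)

Definition A2_nat_cell (w : nat -> A2) (e : nat -> bool) (k : nat) : Prop :=
  cell nat_plus_cantor w e (inl k).

Definition A2_cantor_meets (w : nat -> A2) (e : nat -> bool) : Prop :=
  exists om, cell nat_plus_cantor w e (inr om).

Definition uniformly_finitary (w : nat -> A2) (N : nat) : Prop :=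
  forall i, depends_on_prefix N (proj1_sig (w i)).

(** For every pattern [e], [Q] relates the size of its cell in [A1], the size
    of the [nat] part of its cell in [A2], and whether the latter meets Cantor
    space. *)
Definition linked (Q : enat -> enat -> Prop -> Prop) (v : nat -> A1) (w : nat -> A2) :=
  (exists N, uniformly_finitary w N) /\
  forall e, exists s a, card_is (cell powerset_nat v e) s /\
    card_is (A2_nat_cell w e) a /\ Q s a (A2_cantor_meets w e).

Lemma linked_mono (Q Q' : enat -> enat -> Prop -> Prop) v w :
  (forall s a r, Q s a r -> Q' s a r) -> linked Q v w -> linked Q' v w.
Proof.
  intros HQ [HN H]; split; auto; intros e.
  destruct (H e) as (s & a & ? & ? & ?); exists s, a; auto.
Qed.

Lemma uniformly_finitary_upd w N n x M :
  uniformly_finitary w N -> depends_on_prefix M (proj1_sig x) ->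
  uniformly_finitary (upd w n x) (Nat.max N M).
Proof.
  intros HN Hx i; unfold upd; destruct (Nat.eqb i n);
    [apply (depends_on_prefix_mono M) | apply (depends_on_prefix_mono N)]; auto; lia.
Qed.

Section LinkedUpdates.

Variable Q : enat -> enat -> Prop -> Prop.
Hypothesis Q_0 : Q (fin 0) (fin 0) False.
Hypothesis Q_add : forall s1 a1 (r1 : Prop) s2 a2 (r2 : Prop),
  Q s1 a1 r1 -> Q s2 a2 r2 -> Q (enat_add s1 s2) (enat_add a1 a2) (r1 \/ r2).

(** A move first resets the variable to the top element, merging the two cells
    that differ only at [n]; the new value then splits them afresh. *)
Lemma linked_upd_full v w n :
  linked Q v w -> linked Q (upd v n A1_top) (upd w n A2_top).
Proof.
  intros [[N HN] H]; split.
  - exists (Nat.max N 0); apply uniformly_finitary_upd; auto.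
    exact (depends_on_prefix_const 0 true).
  - intros e; destruct (e n) eqn:En.
    + destruct (H e) as (s1 & a1 & Hs1 & Ha1 & Q1).
      destruct (H (upd e n false)) as (s2 & a2 & Hs2 & Ha2 & Q2).
      exists (enat_add s1 s2), (enat_add a1 a2); split; [|split].
      * apply (card_is_ext (fun p => cell _ v e p \/ cell _ v (upd e n false) p)).
        -- intros p; now rewrite cell_upd_full.
        -- apply card_is_union; auto; intros p; now apply cell_upd_disjoint.
      * apply (card_is_ext (fun k => A2_nat_cell w e k \/ A2_nat_cell w (upd e n false) k)).
        -- intros k; unfold A2_nat_cell; now rewrite cell_upd_full.
        -- apply card_is_union; auto; intros k; now apply cell_upd_disjoint.
      * replace (A2_cantor_meets (upd w n A2_top) e)
          with (A2_cantor_meets w e \/ A2_cantor_meets w (upd e n false)); auto.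
        apply propositional_extensionality; unfold A2_cantor_meets.
        setoid_rewrite cell_upd_full; [|reflexivity]; firstorder.
    + exists (fin 0), (fin 0); split; [|split].
      * apply card_is_0; intros p; rewrite cell_upd_full by reflexivity; intuition congruence.
      * apply card_is_0; intros k; unfold A2_nat_cell.
        rewrite cell_upd_full by reflexivity; intuition congruence.
      * replace (A2_cantor_meets (upd w n A2_top) e) with False; auto.
        apply propositional_extensionality; split; [tauto|]; intros [om Hom].
        apply cell_upd_full in Hom as [? _]; [congruence | reflexivity].
Qed.

End LinkedUpdates.

Inductive cantor_choice := choose_none | choose_all | choose_half.

Definition choice_allows (c : cantor_choice) (b : bool) : Prop :=
  match c with choose_none => b = false | choose_all => b = true | choose_half => True end.

Definition choice_value (c : cantor_choice) (N : nat) (om : nat -> bool) : bool :=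
  match c with choose_none => false | choose_all => true | choose_half => om N end.

Lemma choice_allows_value c N om : choice_allows c (choice_value c N om).
Proof. now destruct c. Qed.

(** One cell at a time: the new element of [A1] cuts the cell by [z]; the
    answer in [A2] cuts the [nat] part by [G] and the Cantor part as [c] says. *)
Definition forth_condition (Q Q' : enat -> enat -> Prop -> Prop) : Prop :=
  forall (S1 S2 : nat -> Prop) (r : Prop) s a (z : nat -> bool),
    card_is S1 s -> card_is S2 a -> Q s a r ->
    exists (G : nat -> bool) (c : cantor_choice), forall b, exists s' a',
      card_is (fun p => S1 p /\ z p = b) s' /\ card_is (fun k => S2 k /\ G k = b) a' /\
      Q' s' a' (r /\ choice_allows c b).

(** [R b]: the new element of [A2] takes value [b] somewhere on the Cantor part
    of the cell. *)
Definition back_condition (Q Q' : enat -> enat -> Prop -> Prop) : Prop :=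
  forall (S1 S2 : nat -> Prop) (r : Prop) (R : bool -> Prop) s a (G' : nat -> bool),
    card_is S1 s -> card_is S2 a -> Q s a r -> (r <-> R true \/ R false) ->
    exists G : nat -> bool, forall b, exists s' a',
      card_is (fun p => S1 p /\ G p = b) s' /\ card_is (fun k => S2 k /\ G' k = b) a' /\
      Q' s' a' (R b).

Section Forth.

Variables (v : nat -> A1) (w : nat -> A2) (n N : nat).
Hypothesis w_finitary : uniformly_finitary w N.
Hypothesis vn_full : forall p, proj1_sig (v n) p = true.
Hypothesis wn_full : forall q, proj1_sig (w n) q = true.

Definition A2_pattern (q : nat + (nat -> bool)) : nat -> bool :=
  fun i => proj1_sig (w i) q.

Lemma A2_pattern_cell e q : cell nat_plus_cantor w e q -> A2_pattern q = e.
Proof. intros H; apply functional_extensionality, H. Qed.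

Definition A2_glue_fun (G : (nat -> bool) -> nat -> bool) (c : (nat -> bool) -> cantor_choice)
  (q : nat + (nat -> bool)) : bool :=
  match q with
  | inl k => G (A2_pattern q) k
  | inr om => choice_value (c (A2_pattern q)) N om
  end.

Lemma A2_glue_fun_depends G c : depends_on_prefix (S N) (A2_glue_fun G c).
Proof.
  intros om om' Hom; simpl.
  replace (A2_pattern (inr om')) with (A2_pattern (inr om)).
  - destruct (c (A2_pattern (inr om))); simpl; auto.
  - apply functional_extensionality; intros i; apply w_finitary; intros j Hj; apply Hom; lia.
Qed.

Definition A2_glue G c : A2 := A2_of (A2_glue_fun G c) (S N) (A2_glue_fun_depends G c).

Lemma choice_realizable c e om b : cell nat_plus_cantor w e (inr om) ->
  choice_allows c b -> exists om', cell nat_plus_cantor w e (inr om') /\ choice_value c N om' = b.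
Proof.
  intros Hom Hb; destruct c; simpl in Hb |- *; try (exists om; split; auto; fail).
  (* Only [choose_half] is left: set bit [N], which no [w i] looks at. *)
  exists (upd om N b); split; [|apply upd_eq].
  intros i; rewrite <- (Hom i); apply w_finitary; intros j Hj; now apply upd_prefix.
Qed.

Lemma cantor_meets_glue G c e :
  A2_cantor_meets (upd w n (A2_glue G c)) e <->
  A2_cantor_meets w (upd e n true) /\ choice_allows (c (upd e n true)) (e n).
Proof.
  unfold A2_cantor_meets; setoid_rewrite cell_upd_split; [|apply wn_full].
  split.
  - intros [om [Hz Hom]]; split; [now exists om|].
    simpl in Hz; rewrite (A2_pattern_cell _ _ Hom) in Hz; rewrite <- Hz.
    apply choice_allows_value.
  - intros [[om Hom] Hb]; destruct (choice_realizable _ _ _ _ Hom Hb) as (om' & Hom' & Hv).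
    exists om'; split; auto; simpl; now rewrite (A2_pattern_cell _ _ Hom').
Qed.

Lemma linked_forth_step Q Q' : forth_condition Q Q' ->
  (forall e, exists s a, card_is (cell powerset_nat v e) s /\
     card_is (A2_nat_cell w e) a /\ Q s a (A2_cantor_meets w e)) ->
  forall z : A1, exists z', linked Q' (upd v n z) (upd w n z').
Proof.
  intros Hforth Hcells z.
  assert (Hc : forall e0, exists Gc : (nat -> bool) * cantor_choice, forall b, exists s' a',
    card_is (fun p => cell _ v e0 p /\ proj1_sig z p = b) s' /\
    card_is (fun k => A2_nat_cell w e0 k /\ fst Gc k = b) a' /\
    Q' s' a' (A2_cantor_meets w e0 /\ choice_allows (snd Gc) b)).
  { intros e0; destruct (Hcells e0) as (s & a & Hs & Ha & HQ).
    destruct (Hforth _ _ _ _ _ (proj1_sig z) Hs Ha HQ) as (G & c & H).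
    exists (G, c); exact H. }
  destruct (functional_choice _ Hc) as [f Hf].
  exists (A2_glue (fun e => fst (f e)) (fun e => snd (f e))); split.
  - exists (Nat.max N (S N)); apply uniformly_finitary_upd; auto; apply A2_glue_fun_depends.
  - intros e; destruct (Hf (upd e n true) (e n)) as (s' & a' & Hs & Ha & HQ).
    exists s', a'; split; [|split].
    + revert Hs; apply card_is_ext; intros p; rewrite cell_upd_split by apply vn_full; tauto.
    + revert Ha; apply card_is_ext; intros k; unfold A2_nat_cell.
      rewrite cell_upd_split by apply wn_full; simpl.
      split; intros [H1 H2]; split; auto;
        [rewrite (A2_pattern_cell _ _ H1) | rewrite (A2_pattern_cell _ _ H2) in H1]; auto.
    + erewrite (propositional_extensionality (A2_cantor_meets _ e)); [exact HQ|].
      apply cantor_meets_glue.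
Qed.

End Forth.

Section Back.

Variables (v : nat -> A1) (w : nat -> A2) (n : nat).
Hypothesis vn_full : forall p, proj1_sig (v n) p = true.
Hypothesis wn_full : forall q, proj1_sig (w n) q = true.

Definition A1_glue (G : (nat -> bool) -> nat -> bool) : A1 :=
  exist _ (fun p => G (fun i => proj1_sig (v i) p) p) I.

Lemma A1_glue_cell G e p : cell powerset_nat v e p -> proj1_sig (A1_glue G) p = G e p.
Proof. intros H; simpl; f_equal; apply functional_extensionality, H. Qed.

Lemma linked_back_step Q Q' : back_condition Q Q' ->
  (forall e, exists s a, card_is (cell powerset_nat v e) s /\
     card_is (A2_nat_cell w e) a /\ Q s a (A2_cantor_meets w e)) ->
  forall y' : A2, (exists N, uniformly_finitary (upd w n y') N) ->
    exists y, linked Q' (upd v n y) (upd w n y').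
Proof.
  intros Hback Hcells y' Hfin.
  set (R e0 b := exists om, cell nat_plus_cantor w e0 (inr om) /\ proj1_sig y' (inr om) = b).
  assert (Hc : forall e0, exists G : nat -> bool, forall b, exists s' a',
    card_is (fun p => cell _ v e0 p /\ G p = b) s' /\
    card_is (fun k => A2_nat_cell w e0 k /\ proj1_sig y' (inl k) = b) a' /\
    Q' s' a' (R e0 b)).
  { intros e0; destruct (Hcells e0) as (s & a & Hs & Ha & HQ).
    apply (Hback _ _ _ _ _ _ _ Hs Ha HQ); unfold A2_cantor_meets, R; split.
    - intros [om Hom]; destruct (proj1_sig y' (inr om)) eqn:E; [left | right]; eauto.
    - intros [[om [Hom _]]|[om [Hom _]]]; eauto. }
  destruct (functional_choice _ Hc) as [f Hf].
  exists (A1_glue f); split; [exact Hfin|].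
  intros e; destruct (Hf (upd e n true) (e n)) as (s' & a' & Hs & Ha & HQ).
  exists s', a'; split; [|split].
  - revert Hs; apply card_is_ext; intros p; rewrite cell_upd_split by apply vn_full.
    split; intros [H1 H2]; split; auto;
      [rewrite (A1_glue_cell _ _ _ H1) | rewrite (A1_glue_cell _ _ _ H2) in H1]; auto.
  - revert Ha; apply card_is_ext; intros k; unfold A2_nat_cell.
    rewrite cell_upd_split by apply wn_full; tauto.
  - erewrite (propositional_extensionality (A2_cantor_meets _ e)); [exact HQ|].
    unfold A2_cantor_meets, R; setoid_rewrite cell_upd_split; [|apply wn_full]; firstorder.
Qed.

End Back.

Lemma linked_forth Q Q' v w n (z : A1) :
  forth_condition Q Q' -> Q (fin 0) (fin 0) False ->
  (forall s1 a1 (r1 : Prop) s2 a2 (r2 : Prop),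
     Q s1 a1 r1 -> Q s2 a2 r2 -> Q (enat_add s1 s2) (enat_add a1 a2) (r1 \/ r2)) ->
  linked Q v w -> exists z', linked Q' (upd v n z) (upd w n z').
Proof.
  intros Hforth Q_0 Q_add H; apply (linked_upd_full Q Q_0 Q_add v w n) in H.
  destruct H as [[N HN] Hcells].
  assert (Hv : forall p, proj1_sig (upd v n A1_top n) p = true) by (intros; now rewrite upd_eq).
  assert (Hw : forall q, proj1_sig (upd w n A2_top n) q = true) by (intros; now rewrite upd_eq).
  destruct (linked_forth_step _ _ n N HN Hv Hw Q Q' Hforth Hcells z) as [z' Hz'].
  exists z'; now rewrite !upd_upd in Hz'.
Qed.

Lemma linked_back Q Q' v w n (y' : A2) :
  back_condition Q Q' -> Q (fin 0) (fin 0) False ->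
  (forall s1 a1 (r1 : Prop) s2 a2 (r2 : Prop),
     Q s1 a1 r1 -> Q s2 a2 r2 -> Q (enat_add s1 s2) (enat_add a1 a2) (r1 \/ r2)) ->
  linked Q v w -> exists y, linked Q' (upd v n y) (upd w n y').
Proof.
  intros Hback Q_0 Q_add H; apply (linked_upd_full Q Q_0 Q_add v w n) in H.
  destruct H as [[N HN] Hcells]; destruct (proj2_sig y') as [M HM].
  assert (Hv : forall p, proj1_sig (upd v n A1_top n) p = true) by (intros; now rewrite upd_eq).
  assert (Hw : forall q, proj1_sig (upd w n A2_top n) q = true) by (intros; now rewrite upd_eq).
  destruct (linked_back_step _ _ n Hv Hw Q Q' Hback Hcells y') as [y Hy].
  - exists (Nat.max N M); now apply uniformly_finitary_upd.
  - exists y; now rewrite !upd_upd in Hy.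
Qed.

Definition QX (s a : enat) (r : Prop) : Prop := s = a /\ (r -> a = inf).
Definition QA (s a : enat) (r : Prop) : Prop := (r -> s = inf) /\ (~ r -> s = a).
Definition QE (s a : enat) (r : Prop) : Prop :=
  (s = fin 0 <-> a = fin 0 /\ ~ r) /\ (r \/ enat_le s a).

Lemma QX_0 : QX (fin 0) (fin 0) False.
Proof. split; tauto. Qed.

Lemma QA_0 : QA (fin 0) (fin 0) False.
Proof. split; tauto. Qed.

Lemma QE_0 : QE (fin 0) (fin 0) False.
Proof. split; [tauto | right; apply enat_le_0]. Qed.

Lemma QX_add s1 a1 (r1 : Prop) s2 a2 (r2 : Prop) :
  QX s1 a1 r1 -> QX s2 a2 r2 -> QX (enat_add s1 s2) (enat_add a1 a2) (r1 \/ r2).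
Proof.
  intros [-> H1] [-> H2]; split; auto; rewrite enat_add_eq_inf; tauto.
Qed.

Lemma QA_add s1 a1 (r1 : Prop) s2 a2 (r2 : Prop) :
  QA s1 a1 r1 -> QA s2 a2 r2 -> QA (enat_add s1 s2) (enat_add a1 a2) (r1 \/ r2).
Proof.
  intros [H1 H1'] [H2 H2']; split.
  - rewrite enat_add_eq_inf; tauto.
  - intros H; rewrite H1', H2' by tauto; reflexivity.
Qed.

Lemma QE_add s1 a1 (r1 : Prop) s2 a2 (r2 : Prop) :
  QE s1 a1 r1 -> QE s2 a2 r2 -> QE (enat_add s1 s2) (enat_add a1 a2) (r1 \/ r2).
Proof.
  intros [Z1 L1] [Z2 L2]; split.
  - rewrite !enat_add_eq_0, Z1, Z2; tauto.
  - destruct L1, L2; auto; right; now apply enat_le_add.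
Qed.

Lemma QX_QA s a r : QX s a r -> QA s a r.
Proof. intros [-> H]; split; auto. Qed.

Lemma QA_QE s a r : QA s a r -> QE s a r.
Proof.
  intros [H1 H2]; destruct (classic r) as [Hr|Hr].
  - rewrite (H1 Hr); split; [split; [discriminate | tauto] | now left].
  - rewrite (H2 Hr); split; [tauto | right; apply enat_le_refl].
Qed.

Lemma QA_unique s s' a r : QA s a r -> QA s' a r -> s = s'.
Proof.
  intros [H1 H2] [H1' H2']; destruct (classic r) as [Hr|Hr];
    [rewrite H1, H1' | rewrite H2, H2']; auto.
Qed.

Lemma QA_exists a r : exists s, QA s a r.
Proof. destruct (classic r) as [Hr|Hr]; [exists inf | exists a]; split; tauto. Qed.

Lemma QE_of_cantor s a (r : Prop) : r -> s <> fin 0 -> QE s a r.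
Proof. intros Hr Hs; split; [tauto | now left]. Qed.

Lemma QE_of_le s a (r : Prop) : ~ r -> enat_le s a -> (s = fin 0 <-> a = fin 0) -> QE s a r.
Proof. intros Hr Hle Hz; split; [tauto | now right]. Qed.

Lemma QE_nonempty s a r : QE s a r -> (s <> fin 0 <-> a <> fin 0 \/ r).
Proof. intros [Hz _]; rewrite Hz; destruct (classic (a = fin 0)); tauto. Qed.

Lemma card_is_and_refl P s (b : bool) : card_is P s -> card_is (fun x => P x /\ b = b) s.
Proof. apply card_is_ext; tauto. Qed.

Lemma card_is_and_neq P (b c : bool) : b <> c -> card_is (fun x => P x /\ b = c) (fin 0).
Proof. intros H; apply card_is_0; tauto. Qed.

Lemma QX_forth : forth_condition QX QX.
Proof.
  intros S1 S2 r s a z Hs Ha [<- Hr].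
  destruct (card_is_pieces S1 s z Hs) as (st & sf & Ht & Hf & ->).
  destruct (card_split S2 st sf Ha) as (G & HGt & HGf).
  (* The Cantor part may join the [true] side only if that side is infinite. *)
  exists G, (match st with inf => choose_all | fin _ => choose_none end).
  intros [|]; [exists st, st | exists sf, sf]; repeat split; auto.
  - destruct st; simpl; [intros [_ E]; discriminate | reflexivity].
  - intros [Hr' Hc]; destruct st; simpl in Hc; [|discriminate].
    destruct (proj1 (enat_add_eq_inf _ _) (Hr Hr')); [discriminate | assumption].
Qed.

Lemma QA_back : back_condition QA QA.
Proof.
  intros S1 S2 r R s a G' Hs Ha HQ HR.
  destruct (card_is_pieces S2 a G' Ha) as (a_t & a_f & Ht & Hf & ->).
  destruct (QA_exists a_t (R true)) as [st Hst], (QA_exists a_f (R false)) as [sf Hsf].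
  assert (Hsum : s = enat_add st sf).
  { apply (QA_unique _ _ _ r HQ).
    rewrite (propositional_extensionality _ _ HR); now apply QA_add. }
  subst s; destruct (card_split S1 st sf Hs) as (G & HGt & HGf).
  exists G; intros [|]; [exists st, a_t | exists sf, a_f]; auto.
Qed.

Lemma QE_forth_cantor S1 S2 (r : Prop) s a (z : nat -> bool) :
  card_is S1 s -> card_is S2 a -> QE s a r -> r ->
  exists (G : nat -> bool) (c : cantor_choice), forall b, exists s' a',
    card_is (fun p => S1 p /\ z p = b) s' /\ card_is (fun k => S2 k /\ G k = b) a' /\
    QE s' a' (r /\ choice_allows c b).
Proof.
  intros Hs Ha HQ Hr.
  assert (Hs0 : s <> fin 0) by (apply (QE_nonempty _ _ _ HQ); auto).
  destruct (card_is_pieces S1 s z Hs) as (st & sf & Ht & Hf & ->).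
  assert (QE_empty : forall b c, ~ choice_allows c b -> QE (fin 0) (fin 0) (r /\ choice_allows c b)).
  { intros b c Hc; apply QE_of_le; [tauto | apply enat_le_0 | tauto]. }
  destruct (classic (st = fin 0)) as [Hst|Hst].
  - subst st; rewrite enat_add_0_l in Hs0.
    exists (fun _ => false), choose_none; intros [|].
    + exists (fin 0), (fin 0); split; [exact Ht | split; [now apply card_is_and_neq|]].
      apply QE_empty; simpl; discriminate.
    + exists sf, a; split; [exact Hf | split; [now apply card_is_and_refl|]].
      apply QE_of_cantor; simpl; auto.
  - destruct (classic (sf = fin 0)) as [Hsf|Hsf].
    + subst sf; exists (fun _ => true), choose_all; intros [|].
      * exists st, a; split; [exact Ht | split; [now apply card_is_and_refl|]].
        apply QE_of_cantor; simpl; auto.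
      * exists (fin 0), (fin 0); split; [exact Hf | split; [now apply card_is_and_neq|]].
        apply QE_empty; simpl; discriminate.
    + exists (fun _ => true), choose_half; intros [|].
      * exists st, a; split; [exact Ht | split; [now apply card_is_and_refl|]].
        apply QE_of_cantor; simpl; auto.
      * exists sf, (fin 0); split; [exact Hf | split; [now apply card_is_and_neq|]].
        apply QE_of_cantor; simpl; auto.
Qed.

Lemma QE_forth_no_cantor S1 S2 (r : Prop) s a (z : nat -> bool) :
  card_is S1 s -> card_is S2 a -> QE s a r -> ~ r ->
  exists (G : nat -> bool) (c : cantor_choice), forall b, exists s' a',
    card_is (fun p => S1 p /\ z p = b) s' /\ card_is (fun k => S2 k /\ G k = b) a' /\
    QE s' a' (r /\ choice_allows c b).
Proof.
  intros Hs Ha [Hz Hle] Hr; destruct Hle as [|Hle]; [contradiction|].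
  assert (Hr' : forall b, ~ (r /\ choice_allows choose_none b)) by tauto.
  destruct (card_is_pieces S1 s z Hs) as (st & sf & Ht & Hf & ->).
  destruct (classic (sf = fin 0)) as [Hsf|Hsf].
  - subst sf; rewrite enat_add_0_r in Hz, Hle.
    exists (fun _ => true), choose_none; intros [|].
    + exists st, a; split; [exact Ht | split; [now apply card_is_and_refl|]].
      apply QE_of_le; auto; tauto.
    + exists (fin 0), (fin 0); split; [exact Hf | split; [now apply card_is_and_neq|]].
      apply QE_of_le; [auto | apply enat_le_0 | tauto].
  - assert (Hst : enat_le st a) by (eapply enat_le_add_l; eauto).
    rewrite <- (enat_add_sub st a Hst) in Ha.
    destruct (card_split S2 st (enat_sub a st) Ha) as (G & HGt & HGf).
    exists G, choose_none; intros [|].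
    + exists st, st; split; [exact Ht | split; [exact HGt|]].
      apply QE_of_le; [auto | apply enat_le_refl | tauto].
    + exists sf, (enat_sub a st); split; [exact Hf | split; [exact HGf|]].
      pose proof (enat_le_sub _ _ _ Hle) as Hsf_le.
      apply QE_of_le; [auto | exact Hsf_le|].
      split; intros E; [contradiction | exfalso; apply Hsf, (enat_le_0_r _ _ Hsf_le E)].
Qed.

Lemma QE_forth : forth_condition QE QE.
Proof.
  intros S1 S2 r s a z Hs Ha HQ; destruct (classic r) as [Hr|Hr];
    [apply (QE_forth_cantor S1 S2 r s a) | apply (QE_forth_no_cantor S1 S2 r s a)]; auto.
Qed.

Lemma linked_QX_init : linked QX (fun _ => A1_top) (fun _ => A2_top).
Proof.
  split; [exists 0; intros i; exact (depends_on_prefix_const 0 true)|].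
  intros e; destruct (classic (forall i, e i = true)) as [H|H].
  - exists inf, inf; split; [|split]; [| |split; auto];
      intros n; exists n; split; auto; intros i; now rewrite H.
  - assert (Hcell : forall (S : field_of_sets) (top : fs_elem S) p,
               (forall q, proj1_sig top q = true) -> ~ cell S (fun _ => top) e p).
    { intros S top p Htop Hp; apply H; intros i; rewrite <- (Hp i); apply Htop. }
    exists (fin 0), (fin 0); split; [|split].
    + apply card_is_0; intros p; now apply Hcell.
    + apply card_is_0; intros k; now apply Hcell.
    + replace (A2_cantor_meets _ e) with False; [exact QX_0|].
      apply propositional_extensionality; split; [tauto|].
      intros [om Hom]; now apply (Hcell _ A2_top (inr om)).
Qed.

Lemma realized_A2 w e :
  realized nat_plus_cantor w e <-> (exists k, A2_nat_cell w e k) \/ A2_cantor_meets w e.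
Proof.
  unfold realized, A2_nat_cell, A2_cantor_meets; split.
  - intros [[k|om] H]; eauto.
  - intros [[k H]|[om H]]; eauto.
Qed.

Lemma linked_QE_realized v w : linked QE v w ->
  forall e, realized powerset_nat v e <-> realized nat_plus_cantor w e.
Proof.
  intros [_ H] e; destruct (H e) as (s & a & Hs & Ha & HQ).
  unfold realized at 1; rewrite realized_A2, (card_is_nonempty _ _ Hs),
    (card_is_nonempty _ _ Ha), (QE_nonempty _ _ _ HQ); tauto.
Qed.

Lemma A1_EAE_A2 phi : EAE_sentence phi -> holds A1 phi -> holds A2 phi.
Proof.
  apply (EAE_preserved A1 A2 (linked QX) (linked QA) (linked QE)).
  - intros v w n x; exact (linked_forth QX QX v w n x QX_forth QX_0 QX_add).
  - intros v w; apply linked_mono, QX_QA.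
  - intros v w n y'; exact (linked_back QA QA v w n y' QA_back QA_0 QA_add).
  - intros v w; apply linked_mono, QA_QE.
  - intros v w n z; exact (linked_forth QE QE v w n z QE_forth QE_0 QE_add).
  - intros v w psi H Hq; apply (fs_qf_sat_transfer _ _ v w (linked_QE_realized v w H) psi Hq).
  - exact (ex_intro _ _ (ex_intro _ _ linked_QX_init)).
Qed.

Theorem mainTheorem8 :
  ~ exists Th : formula -> Prop,
      (forall phi, Th phi -> EAE_sentence phi) /\
      (forall M : algebra, inhabited M ->
         ((forall phi, Th phi -> holds M phi) <-> completely_representable M)).
Proof.
  intros (Th & HEAE & Haxiomatises).
  apply A2_not_completely_representable, (Haxiomatises A2 (inhabits A2_top)).
  intros phi Hphi; apply A1_EAE_A2; [now apply HEAE|].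
  revert phi Hphi; apply (Haxiomatises A1 (inhabits A1_top)).
  exact A1_completely_representable.
Qed.
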